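(* Let $FD_{j,2}(\alpha,\lambda,n)$ be the number of partitions with perimeter $n$, largest part $\alpha$, exactly $\lambda$ parts, and exactly $j$ distinct part sizes appearing at least twice. Then, as formal power series, $$\sum_{\alpha,\lambda,n\geq 1}\sum_{j\geq 0} FD_{j,2}(\alpha,\lambda,n)\,x^\alpha y^\lambda z^j q^n=\frac{xyq\,(1-(1-z)yq)}{1-(x+y)q+(1-z)xy^2q^3}.$$
   Context: A partition is a finite nonincreasing sequence of positive integers (its parts); its size is not fixed. For a partition $\pi$ with largest part $\alpha(\pi)$ and number of parts $\lambda(\pi)$, its perimeter is $\alpha(\pi)+\lambda(\pi)-1$. (Note $FD_{j,2}(\alpha,\lambda,n)=0$ unless $n=\alpha+\lambda-1$.) *)

From mathcomp Require Import all_boot all_order all_algebra.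
Set Implicit Arguments. Unset Strict Implicit. Unset Printing Implicit Defensive.
Import GRing.Theory Num.Theory.

Definition is_partition (s : seq nat) : bool :=
  sorted geq s && all (fun k => 0 < k) s.

Definition largest_part (s : seq nat) : nat := foldr maxn 0 s.
Definition num_parts (s : seq nat) : nat := size s.
Definition perimeter (s : seq nat) : nat := largest_part s + num_parts s - 1.
Definition num_repeated_sizes (s : seq nat) : nat :=
  size (undup [seq k <- s | 1 < count_mem k s]).

(* A partition with lambda parts, all <= alpha, is encoded by a
   lambda.-tuple of elements of 'I_alpha.+1 (bijectively, via map val). *)
Definition FD2 (j a l n : nat) : nat :=
  #|[set t : l.-tuple 'I_a.+1 |
      let s := map val t in
      [&& is_partition s, largest_part s == a, num_parts s == l,
          perimeter s == n & num_repeated_sizes s == j]]|.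

(* Formal power series in x, y, z, q with integer coefficients:
   f a l j n is the coefficient of x^a y^l z^j q^n. *)
Definition ps := nat -> nat -> nat -> nat -> int.

Local Open Scope ring_scope.

Definition psmul (f g : ps) : ps := fun a l j n =>
  \sum_(i1 < a.+1) \sum_(i2 < l.+1) \sum_(i3 < j.+1) \sum_(i4 < n.+1)
     f i1 i2 i3 i4 * g (a - i1)%N (l - i2)%N (j - i3)%N (n - i4)%N.

Definition psadd (f g : ps) : ps := fun a l j n => f a l j n + g a l j n.

Definition mono (c : int) (a0 l0 j0 n0 : nat) : ps := fun a l j n =>
  if [&& a == a0, l == l0, j == j0 & n == n0] then c else 0.

Definition FDgf : ps := fun a l j n =>
  if [&& (0 < a)%N, (0 < l)%N & (0 < n)%N] then (FD2 j a l n)%:Z else 0.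

(* numerator  x y q (1 - (1 - z) y q) = xyq - x y^2 q^2 + z x y^2 q^2 *)
Definition numer : ps :=
  psadd (mono 1 1 1 0 1) (psadd (mono (-1) 1 2 0 2) (mono 1 1 2 1 2)).

(* denominator 1 - (x + y) q + (1 - z) x y^2 q^3 *)
Definition denom : ps :=
  psadd (mono 1 0 0 0 0)
  (psadd (mono (-1) 1 0 0 1)
  (psadd (mono (-1) 0 1 0 1)
  (psadd (mono 1 1 2 0 3) (mono (-1) 1 2 1 3)))).

From mathcomp Require Import all_boot all_order all_algebra zify.
Set Implicit Arguments. Unset Strict Implicit. Unset Printing Implicit Defensive.

(* Every monomial x^a y^l z^j q^n of the left side and of the numerator has
   n = a + l - 1, and every monomial of the denominator has n = a + l, so the
   identity reduces to one for G(a, l, j), the number of partitions with largest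
   part a, l parts and j repeated part sizes:
     G(a,l) - G(a-1,l) - G(a,l-1) + G(a-1,l-2) - z G(a-1,l-2) = [numerator].
   Writing P(b, l) for the partitions into l parts at most b, removing one copy
   of the largest part a gives
     G(a,l) = G(a,l-1) + P(a-1,l-1) - P(a-1,l-2) + z P(a-1,l-2),
   and differencing this in a, using P(a,l) = P(a-1,l) + G(a,l), yields the
   recurrence away from the boundary. *)

(* [parts b l] lists the partitions with [l] parts, all at most [b]; those
   using the part [b] are grouped by the number [i] of their smaller parts. *)
Fixpoint parts (b l : nat) : seq (seq nat) :=
  if b is b'.+1 then
    parts b' l ++ [seq nseq (l - i) b ++ s | i <- iota 0 l, s <- parts b' i]
  else if l is 0 then [:: [::]] else [::].

Definition parts_top (b l : nat) : seq (seq nat) :=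
  [seq nseq (l - i) b.+1 ++ s | i <- iota 0 l, s <- parts b i].

Lemma parts_S b l : parts b.+1 l = parts b l ++ parts_top b l.
Proof. by []. Qed.

Definition bounded_partition (b l : nat) (s : seq nat) : bool :=
  [&& sorted geq s, all (fun k => 0 < k <= b) s & size s == l].

Lemma sorted_geq_nseq_cat m c s :
  sorted geq s -> all (fun k => k <= c) s -> sorted geq (nseq m c ++ s).
Proof.
move=> s_sorted s_le; elim: m => [//|m IHm] /=.
rewrite (path_sortedE (rev_trans leq_trans)) IHm andbT all_cat s_le andbT.
by apply/allP => x /nseqP [-> _] /=.
Qed.

Lemma sorted_geq_split_top b s :
  sorted geq s -> all (fun k => 0 < k <= b.+1) s ->
  exists m s', [/\ s = nseq m b.+1 ++ s', sorted geq s' & all (fun k => 0 < k <= b) s'].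
Proof.
elim: s => [|x r IHr] /=; first by exists 0, [::].
rewrite (path_sortedE (rev_trans leq_trans)) => /andP [r_le_x r_sorted].
move=> /andP [/andP [x_gt0 x_le] r_bnd].
have [x_le_b|x_gt_b] := leqP x b.
  exists 0, (x :: r); split => //=; first by rewrite (path_sortedE (rev_trans leq_trans)) r_le_x.
  rewrite x_gt0 x_le_b; apply/allP => y yr; have /= := allP r_le_x y yr.
  by have /= := allP r_bnd y yr; lia.
have {x_le x_gt_b} -> : x = b.+1 by lia.
by have [m [s' [-> ? ?]]] := IHr r_sorted r_bnd; exists m.+1, s'.
Qed.

Lemma mem_parts b l s : (s \in parts b l) = bounded_partition b l s.
Proof.
rewrite /bounded_partition; elim: b l s => [|b IHb] l s.
  by case: l => [|l]; case: s => [|[|x] s]; rewrite ?inE ?andbF.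
rewrite parts_S mem_cat IHb; apply/idP/idP.
  case/orP => [/and3P [-> s_bnd ->]|/allpairsPdep [i [s' []]]].
    by rewrite andbT; apply/allP => x /(allP s_bnd) /=; lia.
  rewrite mem_iota IHb add0n => /andP [_ il] /and3P [s'_sorted s'_bnd /eqP si] ->.
  have s'_le : all (fun k => k <= b.+1) s' by apply/allP => x /(allP s'_bnd) /=; lia.
  rewrite sorted_geq_nseq_cat // all_cat size_cat size_nseq si subnK ?(ltnW il) // eqxx andbT.
  rewrite andTb; apply/andP; split; first by apply/allP => x /nseqP [-> _]; rewrite leqnn.
  by apply/allP => x /(allP s'_bnd) /=; lia.
case/and3P => s_sorted s_bnd /eqP <-.
have [[|m] [s' [-> s'_sorted s'_bnd]]] := sorted_geq_split_top s_sorted s_bnd.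
  by rewrite /= s'_sorted s'_bnd eqxx.
apply/orP; right; apply/allpairsPdep; exists (size s'), s'.
rewrite mem_iota IHb s'_sorted s'_bnd size_cat size_nseq eqxx; split => //.
  by apply/andP; split; lia.
by congr (nseq _ _ ++ _); lia.
Qed.

Lemma mem_parts_le b l s : s \in parts b l -> all (fun k => k <= b) s.
Proof. by rewrite mem_parts => /and3P [_ /allP s_bnd _]; apply/allP => x /s_bnd /andP []. Qed.

Lemma count_mem_gt c s : all (fun k => k <= c) s -> count_mem c.+1 s = 0.
Proof. by move=> /allP s_le; apply/count_memPn/negP => /s_le; rewrite ltnn. Qed.

Lemma uniq_parts b l : uniq (parts b l).
Proof.
elim: b l => [|b IHb] l; first by case: l.
rewrite parts_S cat_uniq IHb /=; apply/andP; split.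
  apply/hasPn => _ /allpairsPdep [i [s [il _ ->]]]; apply/negP => /mem_parts_le.
  rewrite mem_iota in il; rewrite all_cat => /andP [+ _].
  have -> : l - i = (l - i).-1.+1 by lia.
  by rewrite /= ltnn.
rewrite /parts_top; apply: allpairs_uniq_dep => [|i _|[x1 y1] [x2 y2]].
- exact: iota_uniq.
- exact: IHb.
move=> /allpairsPdep [i1 [s1 [i1l s1P [e1 e1']]]].
move=> /allpairsPdep [i2 [s2 [i2l s2P [e2 e2']]]] /= E.
subst x1 x2 y1 y2; rewrite mem_iota in i1l i2l.
have := congr1 (count_mem b.+1) E; rewrite !count_cat !count_nseq /= eqxx !mul1n.
rewrite !count_mem_gt ?(mem_parts_le s1P) ?(mem_parts_le s2P) // => count_eq.
have {count_eq i2l} ei : i1 = i2 by lia.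
by move: E; rewrite ei => /eqP; rewrite eqseq_cat ?size_nseq // eqxx => /eqP ->.
Qed.

Lemma map_val_inord a s : all (fun k => k <= a) s -> map val (map (@inord a) s) = s.
Proof.
move=> /allP s_le; rewrite -map_comp -[RHS]map_id.
by apply/eq_in_map => x /s_le x_le /=; rewrite inordK.
Qed.

Lemma card_tuple_partitions a l (Q : pred (seq nat)) :
  {subset Q <= is_partition} ->
  #|[set t : l.-tuple 'I_a.+1 | Q (map val t)]| = count Q (parts a l).
Proof.
move=> QP; pose f (t : l.-tuple 'I_a.+1) := map val t.
have f_inj : injective f by move=> t1 t2 /(inj_map val_inj)/val_inj.
rewrite cardE -size_filter -(size_map f); apply/perm_size/uniq_perm.
- by rewrite (map_inj_uniq f_inj) enum_uniq.
- by rewrite filter_uniq // uniq_parts.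
move=> s; rewrite mem_filter mem_parts /bounded_partition.
apply/mapP/idP => [[t]|].
  rewrite mem_enum inE /f => Qt ->; have /andP [-> t_pos] := QP _ Qt.
  rewrite Qt size_map size_tuple eqxx andbT; apply/allP => x x_t.
  by rewrite (allP t_pos x x_t); case/mapP: x_t => y _ ->; rewrite -ltnS ltn_ord.
case/andP => Qs /and3P [_ s_bnd /eqP s_size].
have s_le : all (fun k => k <= a) s by apply/allP => x /(allP s_bnd) /andP [].
have t_size : size (map (@inord a) s) == l by rewrite size_map s_size.
by exists (Tuple t_size); rewrite ?mem_enum ?inE /f /= map_val_inord.
Qed.

Lemma size_undup_nseq_cat m (c : nat) s : c \notin s ->
  size (undup (nseq m c ++ s)) = (0 < m) + size (undup s).
Proof.
move=> cNs; elim: m => [//|m IHm].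
rewrite cat_cons [undup _]/= mem_cat (negbTE cNs) orbF.
case: m IHm => [|m] IHm; first by rewrite /= add1n.
by rewrite inE eqxx IHm.
Qed.

Lemma num_repeated_sizes_nseq_cat m c s : c \notin s ->
  num_repeated_sizes (nseq m c ++ s) = (1 < m) + num_repeated_sizes s.
Proof.
move=> cNs; rewrite /num_repeated_sizes filter_cat filter_nseq /=.
rewrite count_cat count_nseq /= eqxx mul1n (count_memPn cNs) addn0.
have -> : [seq x <- s | 1 < count_mem x (nseq m c ++ s)] = [seq x <- s | 1 < count_mem x s].
  apply: eq_in_filter => x xs; rewrite count_cat count_nseq /=.
  by case: eqP => [cx|//]; move: xs cNs; rewrite cx => ->.
rewrite size_undup_nseq_cat ?mem_filter ?(negbTE cNs) ?andbF //.
by case: (ltnP 1 m) => m1; rewrite ?mul1n ?mul0n // (ltnW m1).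
Qed.

Lemma largest_part_le c s : all (fun k => k <= c) s -> largest_part s <= c.
Proof. by elim: s => [|x s IHs] //= /andP [xc /IHs]; rewrite geq_max xc. Qed.

Lemma largest_part_nseq_cat m c s : 0 < m -> all (fun k => k <= c) s ->
  largest_part (nseq m c ++ s) = c.
Proof.
case: m => [//|m] _ /largest_part_le s_le; rewrite /largest_part foldr_cat /=.
apply/maxn_idPl; elim: m => [//|m IHm] /=; by rewrite geq_max leqnn.
Qed.

(* The shift [k] stands for a factor [z^k] of the generating function. *)
Definition count_bounded (k b l j : nat) : nat :=
  count (fun s => num_repeated_sizes s + k == j) (parts b l).

Definition count_top (k a l j : nat) : nat :=
  if a is b.+1 then count (fun s => num_repeated_sizes s + k == j) (parts_top b l) else 0.

Lemma count_bounded_S k b l j :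
  count_bounded k b.+1 l j = count_bounded k b l j + count_top k b.+1 l j.
Proof. by rewrite /count_bounded parts_S count_cat. Qed.

Lemma count_top_sum k b l j :
  count_top k b.+1 l j = \sum_(i < l) count_bounded (k + (1 < l - i)) b i j.
Proof.
rewrite /count_top /parts_top count_flatten sumnE big_map.
rewrite -(big_mkord xpredT (fun i => count_bounded (k + (1 < l - i)) b i j)).
rewrite /index_iota subn0 big_map; apply: eq_bigr => i _; rewrite count_map.
apply: eq_in_count => s /mem_parts_le /count_mem_gt s_le /=.
rewrite num_repeated_sizes_nseq_cat -?has_pred1 ?has_count ?s_le //.
by rewrite addnAC addnC [k + _]addnC.
Qed.

Lemma count_bounded_0 k l j : count_bounded k 0 l j = (l == 0) && (k == j).
Proof. by case: l => [|l]; rewrite /count_bounded /= ?addn0. Qed.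

Lemma count_top_nil k a j : count_top k a 0 j = 0.
Proof. by case: a. Qed.

Lemma count_bounded_nil k b j : count_bounded k b 0 j = (k == j).
Proof.
elim: b => [|b IHb]; first by rewrite count_bounded_0.
by rewrite count_bounded_S IHb count_top_nil addn0.
Qed.

Lemma count_top_single k b j : count_top k b.+1 1 j = (k == j).
Proof. by rewrite count_top_sum big_ord1 addn0 count_bounded_nil. Qed.

Lemma count_top_1 k l j : count_top k 1 l.+1 j = (k + (1 < l.+1) == j).
Proof.
rewrite count_top_sum big_ord_recl big1 => [|i _]; last by rewrite count_bounded_0.
by rewrite subn0 count_bounded_0 addn0.
Qed.

Lemma count_top_S k b l j :
  count_top k b.+1 l.+1 j = count_bounded k b l j + \sum_(i < l) count_bounded k.+1 b i j.
Proof.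
rewrite count_top_sum big_ord_recr /= subSnn addn0 addnC; congr (_ + _).
apply: eq_bigr => i _; have i_le : i <= l by apply: ltnW.
by rewrite subSn // ltnS subn_gt0 ltn_ord addn1.
Qed.

(* Removing one copy of the largest part [b.+1] from a partition with [m.+2]
   parts: the copy was unique, or one of exactly two (a new repeated size), or
   one of at least three. *)
Lemma count_top_SS k b m j :
  count_top k b.+1 m.+2 j + count_bounded k b m j =
  count_top k b.+1 m.+1 j + count_bounded k b m.+1 j + count_bounded k.+1 b m j.
Proof.
rewrite (count_top_S k b m.+1) (count_top_S k b m) big_ord_recr /=.
set S := \sum_(i < m) _; lia.
Qed.

Lemma count_top_recurrence k b m j :
  count_top k b.+2 m.+2 j + count_top k b.+1 m j =
  count_top k b.+2 m.+1 j + count_top k b.+1 m.+2 j + count_top k.+1 b.+1 m j.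
Proof.
have := count_top_SS k b.+1 m j; have := count_top_SS k b m j.
rewrite (count_bounded_S k b m) (count_bounded_S k b m.+1) (count_bounded_S k.+1 b m).
lia.
Qed.

Lemma count_top_shift k a l j :
  (if 0 < j then count_top k a l j.-1 else 0) = count_top k.+1 a l j.
Proof.
case: a => [|b]; first by case: ifP.
case: j => [|j] /=; last by apply: eq_count => s; rewrite addnS eqSS.
by apply/esym/eqP; rewrite -leqn0 leqNgt -has_count; apply/hasPn => s _; rewrite addnS.
Qed.

Lemma mem_parts_partition b l s :
  s \in parts b l -> is_partition s /\ num_parts s = l.
Proof.
rewrite mem_parts => /and3P [s_sorted /allP s_bnd /eqP s_size]; split => //.
by rewrite /is_partition s_sorted; apply/allP => x /s_bnd /andP [].
Qed.

Lemma mem_parts_top b l s : s \in parts_top b l ->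
  [/\ is_partition s, largest_part s = b.+1 & num_parts s = l].
Proof.
move=> s_top; have /mem_parts_partition [s_part s_size] : s \in parts b.+1 l.
  by rewrite parts_S mem_cat s_top orbT.
split => //; case/allpairsPdep: s_top => i [s' [il /mem_parts_le s'_le ->]].
rewrite mem_iota in il; apply: largest_part_nseq_cat; first by rewrite subn_gt0.
by apply/allP => x /(allP s'_le) /leqW.
Qed.

Lemma FD2_count_top j a l n :
  FD2 j a.+1 l n = if n == a.+1 + l - 1 then count_top 0 a.+1 l j else 0.
Proof.
pose Q s := [&& is_partition s, largest_part s == a.+1, num_parts s == l,
                perimeter s == n & num_repeated_sizes s == j].
rewrite /FD2 (@card_tuple_partitions a.+1 l Q) => [|s /andP [] //].
rewrite parts_S count_cat (@eq_in_count _ _ pred0 (parts a l)); last first.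
  move=> s /mem_parts_le /largest_part_le s_le /=.
  by rewrite /Q ltn_eqF ?andbF // ltnS.
rewrite count_pred0 add0n /count_top.
have top_Q s : s \in parts_top a l ->
    Q s = (n == a.+1 + l - 1) && (num_repeated_sizes s + 0 == j).
  case/mem_parts_top => s_part s_max s_size.
  by rewrite /Q /perimeter s_part s_max s_size !eqxx addn0 [n == _]eq_sym.
rewrite (eq_in_count top_Q); case: eqP => _ //.
by rewrite (@eq_count _ _ pred0) ?count_pred0.
Qed.

Import GRing.Theory.
Local Open Scope ring_scope.

Lemma eq_psmul f f' g a l j n : (forall a l j n, f a l j n = f' a l j n) ->
  psmul f g a l j n = psmul f' g a l j n.
Proof.
by move=> ff'; do 4![apply: eq_bigr => ? _]; rewrite ff'.
Qed.

Lemma psmul_addr f g h a l j n :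
  psmul f (psadd g h) a l j n = psmul f g a l j n + psmul f h a l j n.
Proof.
by rewrite -!big_split; do 4![apply: eq_bigr => ? _; rewrite -?big_split]; rewrite mulrDr.
Qed.

Lemma sum_ord_pick N N0 (F : 'I_N.+1 -> int) :
  \sum_(i < N.+1) (if (N - i == N0)%N then F i else 0) =
  if (N0 <= N)%N then F (inord (N - N0)) else 0.
Proof.
case: leqP => N0N; last first.
  by rewrite big1 // => i _; case: eqP => // Ni; have := ltn_ord i; lia.
have NN0 : (N - N0 < N.+1)%N by rewrite ltnS leq_subr.
rewrite (bigD1 (inord (N - N0))) //= inordK // subKn // eqxx big1 ?addr0 //.
move=> i i_ne.
case: eqP => // Ni; case/eqP: i_ne; apply: val_inj.
by rewrite /= inordK //; have := ltn_ord i; lia.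
Qed.

Lemma sum_if_const n (b : bool) (F : 'I_n -> int) :
  \sum_(i < n) (if b then F i else 0) = if b then \sum_(i < n) F i else 0.
Proof. by case: b => //; rewrite big1. Qed.

Lemma psmul_mono f c a0 l0 j0 n0 a l j n :
  psmul f (mono c a0 l0 j0 n0) a l j n =
  if [&& (a0 <= a)%N, (l0 <= l)%N, (j0 <= j)%N & (n0 <= n)%N]
  then f (a - a0)%N (l - l0)%N (j - j0)%N (n - n0)%N * c else 0.
Proof.
have nested_ifs (x1 x2 x3 x4 : nat) :
    f x1 x2 x3 x4 * mono c a0 l0 j0 n0 (a - x1)%N (l - x2)%N (j - x3)%N (n - x4)%N =
    if (n - x4 == n0)%N then if (j - x3 == j0)%N then if (l - x2 == l0)%N then
    if (a - x1 == a0)%N then f x1 x2 x3 x4 * c else 0 else 0 else 0 else 0.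
  by rewrite /mono; do 4!case: eqP => _; rewrite ?mulr0.
rewrite /psmul.
under eq_bigr => ? _ do under eq_bigr => ? _ do under eq_bigr => ? _ do
  under eq_bigr => ? _ do rewrite nested_ifs.
under eq_bigr => ? _ do under eq_bigr => ? _ do under eq_bigr => ? _ do
  rewrite sum_ord_pick.
under eq_bigr => ? _ do under eq_bigr => ? _ do rewrite sum_if_const sum_ord_pick.
under eq_bigr => ? _ do rewrite !sum_if_const sum_ord_pick.
rewrite !sum_if_const sum_ord_pick.
case: (leqP n0 n) => n0n; case: (leqP j0 j) => j0j;
  case: (leqP l0 l) => l0l; case: (leqP a0 a) => a0a; rewrite /= ?andbF //.
by rewrite !inordK // ltnS leq_subr.
Qed.

Definition ps_perimeter (g : nat -> nat -> nat -> int) : ps :=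
  fun a l j n => if (n == a + l - 1)%N then g a l j else 0.

Lemma psmul_perimeter_mono g c a0 l0 j0 a l j n :
  (forall l j, g 0%N l j = 0) -> (forall a j, g a 0%N j = 0) ->
  psmul (ps_perimeter g) (mono c a0 l0 j0 (a0 + l0)) a l j n =
  ps_perimeter (fun a l j =>
    if (j0 <= j)%N then g (a - a0)%N (l - l0)%N (j - j0)%N * c else 0) a l j n.
Proof.
move=> g_0l g_a0; rewrite psmul_mono /ps_perimeter.
have [a_le|a_gt] := leqP a a0.
  by move: a_le; rewrite -subn_eq0 => /eqP ->; rewrite g_0l; do !case: ifP => _; rewrite ?mul0r.
have [l_le|l_gt] := leqP l l0.
  by move: l_le; rewrite -subn_eq0 => /eqP ->; rewrite g_a0; do !case: ifP => _; rewrite ?mul0r.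
rewrite (ltnW a_gt) (ltnW l_gt) /=; case: (j0 <= j)%N; last by rewrite if_same.
have [->|n_ne] /= := eqVneq n (a + l - 1)%N.
  have -> : (a0 + l0 <= a + l - 1)%N by lia.
  by rewrite (_ : (a + l - 1 - (a0 + l0) == a - a0 + (l - l0) - 1)%N) //; apply/eqP; lia.
by case: ifP => // _; rewrite ifN ?mul0r //; apply/eqP; lia.
Qed.

Lemma FDgf_perimeter a l j n :
  FDgf a l j n = ps_perimeter (fun a l j => (count_top 0 a l j)%:Z) a l j n.
Proof.
rewrite /FDgf /ps_perimeter; case: a => [|a]; first by case: ifP.
case: l => [|l]; first by rewrite count_top_nil; case: ifP.
by case: n => [|n] /=; rewrite ?FD2_count_top; case: ifP => // /eqP; lia.
Qed.

Lemma numer_perimeter a l j n :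
  numer a l j n = if (n == a + l - 1)%N then numer a l j (a + l - 1)%N else 0.
Proof.
have [->|n_ne] := eqVneq n (a + l - 1)%N; first by [].
have off (l0 j0 : nat) : [&& a == 1%N, l == l0, j == j0 & n == l0] = false.
  by apply/negbTE/and4P => -[/eqP a1 /eqP ll0 _ /eqP nl0]; move/eqP: n_ne; lia.
by rewrite /numer /psadd /mono !off !addr0.
Qed.

Lemma numer_eq0 a l j n : a != 1%N -> numer a l j n = 0.
Proof. by move/negbTE=> a_ne1; rewrite /numer /psadd /mono a_ne1 /= !addr0. Qed.

Lemma count_top_identity a l j :
  (count_top 0 a l j)%:Z - (count_top 0 (a - 1) l j)%:Z - (count_top 0 a (l - 1) j)%:Z
  + (count_top 0 (a - 1) (l - 2) j)%:Z - (count_top 1 (a - 1) (l - 2) j)%:Z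
  = numer a l j (a + l - 1)%N.
Proof.
have [->|a_ne1] := eqVneq a 1%N.
  rewrite subnn /numer /psadd /mono.
  by case: l => [|[|[|m]]]; case: j => [|[|j]];
    rewrite ?subSS ?sub0n ?subn0 ?count_top_nil ?count_top_1.
rewrite numer_eq0 //; case: a a_ne1 => [|[|b]] // _.
case: l => [|[|m]]; rewrite ?subSS ?sub0n ?subn0 ?count_top_nil ?count_top_single //.
  by rewrite subrr.
have := count_top_recurrence 0 b m j; lia.
Qed.

Theorem mainTheorem2 :
  forall a l j n : nat, psmul FDgf denom a l j n = numer a l j n.
Proof.
move=> a l j n.
have G_0l l' j' : (count_top 0 0 l' j')%:Z = 0 by [].
have G_a0 a' j' : (count_top 0 a' 0 j')%:Z = 0 by rewrite count_top_nil.
rewrite (@eq_psmul _ _ denom a l j n FDgf_perimeter) /denom !psmul_addr.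
rewrite !psmul_perimeter_mono // /ps_perimeter numer_perimeter.
case: (n == a + l - 1)%N => //.
rewrite -count_top_identity -(count_top_shift 0) !subn0 !subn1 !leq0n.
by case: (0 < j)%N; lia.
Qed.
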